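(* Let $0<p<1$ and let $k\ge 1$ be an integer. A coin showing heads (H) with probability $p$ and tails (T) with probability $1-p$ is flipped independently until $k$ consecutive heads $\mathrm{H}^k$ first appear; let $Y$ be the number of flips. Then $E(Y^0)=1$ and for every $n\ge 1$, \[ E(Y^n) = k^n + \sum_{j=0}^{n-1} \binom{n}{j} E(Y^j) \sum_{i=1}^k \frac{(1-p)\,i^{n-j}}{p^{k-i+1}} = k^n + \sum_{j=0}^{n-1} \binom{n}{j} E(Y^j) \sum_{i=0}^n \frac{e_{n-j,i}\, p^i - e_{n-j,i}^k\, p^{k+i+1}}{(1-p)^{n-j}p^{k+1}}. \]
   Context: The Eulerian numbers $e_{n,i}$ are defined by $e_{0,0}=1$, $e_{n,i}=0$ whenever $i\le 0$ (unless $n=i=0$) or $i>n$, and $e_{n,i}=i\,e_{n-1,i}+(n-i+1)\,e_{n-1,i-1}$ otherwise. For the integer parameter $k$, $e^k_{0,0}=1$, $e^k_{n,i}=0$ whenever $i<0$ or $i>n$, and $e^k_{n,i}=(k+i+1)\,e^k_{n-1,i}+(n-k-i)\,e^k_{n-1,i-1}$ otherwise. *)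

From HB Require Import structures.
From mathcomp Require Import all_boot all_order all_algebra.
From mathcomp Require Import all_classical all_reals all_analysis.
Set Implicit Arguments. Unset Strict Implicit. Unset Printing Implicit Defensive.
Import Order.TTheory GRing.Theory Num.Theory.
Import numFieldNormedType.Exports.
Local Open Scope ring_scope.

Fixpoint eul (n i : nat) : nat :=
  match n with
  | 0 => (i == 0)%N
  | n'.+1 => if (i == 0)%N || (n'.+1 < i)%N then 0%N
             else (i * eul n' i + (n'.+1 - i + 1) * eul n' i.-1)%N
  end.

Fixpoint eulk (k : int) (n i : nat) : int :=
  match n with
  | 0 => ((i == 0)%N)%:Z
  | n'.+1 => if (n'.+1 < i)%N then 0
             else (k + i%:Z + 1) * eulk k n' i
                  + (n'.+1%:Z - k - i%:Z) * (if i is i'.+1 then eulk k n' i' else 0)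
  end.

(* The boolean sequence s (true = heads) contains k consecutive heads. *)
Definition has_run (k : nat) (s : seq bool) : bool :=
  [exists i : 'I_(size s).+1, (i + k <= size s)%N && all id (take k (drop i s))].

Definition first_run_at_end (k : nat) (s : seq bool) : bool :=
  has_run k s && ~~ has_run k (take (size s).-1 s).

Definition word_prob {R : realType} (p : R) (s : seq bool) : R :=
  \prod_(b <- s) (if b then p else 1 - p).

Definition PY {R : realType} (p : R) (k m : nat) : R :=
  \sum_(w : m.-tuple bool | first_run_at_end k w) word_prob p w.

Definition EY {R : realType} (p : R) (k n : nat) : R :=
  limn (series (fun m : nat => (m%:R : R) ^+ n * PY p k m)).

(* Conditioning on the first tail: either the first k flips are heads (Y = k,
   probability p^k), or the first tail comes at flip i <= k (probability
   p^(i-1) (1 - p)) and the experiment starts afresh, so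
     P(Y = m) = [m = k] p^k + sum_(i=1..k) p^(i-1) (1 - p) P(Y = m - i).
   Multiplying by m^n, summing over m < N and expanding (m + i)^n binomially
   expresses the partial sums of E(Y^n) through those of E(Y^j), j <= n; the
   j = n term carries the factor 1 - p^k < 1, so by induction on n the
   nondecreasing partial sums are bounded, converge, and their limits satisfy
   the first recursion.  The Eulerian form follows from the polynomial identity
     (1 - X)^(m+1) sum_(i<=k) i^m X^i = A_m(X) - X^(k+1) B_m(X),
   A_m, B_m having coefficients e_(m,i), e^k_(m,i): both sides satisfy
   q_(m+1) = X ((1 - X) q_m' + (m + 1) q_m). *)

From HB Require Import structures.
From mathcomp Require Import all_boot all_order all_algebra.
From mathcomp Require Import all_classical all_reals all_analysis.
From mathcomp Require Import ring lra zify.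
Import Order.TTheory GRing.Theory Num.Theory.
Import numFieldNormedType.Exports.
Local Open Scope classical_set_scope.
Local Open Scope ring_scope.

(** * Eulerian polynomials *)

Lemma eul_eq0 {m t} : (m < t)%N -> eul m t = 0%N.
Proof. by case: m => [|m] /=; [case: t | move=> ->; rewrite orbT]. Qed.

Lemma eulk_eq0 {k m t} : (m < t)%N -> eulk k m t = 0.
Proof. by case: m => [|m] /=; [case: t | move=> ->]. Qed.

Section EulerianPolynomials.
Variables (R : comNzRingType) (k : nat).

Definition eulerian_poly m : {poly R} := \poly_(i < m.+1) (eul m i)%:R.
Definition eulerk_poly m : {poly R} := \poly_(i < m.+1) (eulk k%:Z m i)%:~R.
Definition power_sum_poly m : {poly R} := \poly_(i < k.+1) (i%:R ^+ m).
Definition eulerian_step m (q : {poly R}) := 'X * ((1 - 'X) * q^`() + q *+ m.+1).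

Lemma coef_eulerian_poly m t : (eulerian_poly m)`_t = (eul m t)%:R.
Proof. by rewrite coef_poly; case: ltnP => // /eul_eq0 ->. Qed.

Lemma coef_eulerk_poly m t : (eulerk_poly m)`_t = (eulk k%:Z m t)%:~R.
Proof. by rewrite coef_poly; case: ltnP => // /eulk_eq0 ->. Qed.

Lemma coefXM_deriv (q : {poly R}) t : ('X * q^`())`_t = q`_t *+ t.
Proof. by rewrite coefXM coef_deriv; case: t => [|t]; rewrite ?mulr0n. Qed.

Lemma eulerian_polyS m : eulerian_poly m.+1 = eulerian_step m (eulerian_poly m).
Proof.
apply/polyP => -[|t]; rewrite coef_eulerian_poly coefXM //=.
rewrite mulrBl mul1r coefD coefB coefMn coef_deriv coefXM_deriv !coef_eulerian_poly.
case: ltnP => [|tm].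
  rewrite ltnS => tm; rewrite (eul_eq0 tm) (eul_eq0 (ltnW tm : (m < t.+1)%N)).
  by rewrite !mul0rn subrr add0r.
rewrite natrD !natrM natrD natrB //.
move: (eul m t.+1)%:R (eul m t)%:R => a b; ring.
Qed.

Lemma eulerk_polyS m : eulerk_poly m.+1 =
  (1 - 'X) * (eulerk_poly m *+ k.+1 + 'X * (eulerk_poly m)^`()) + 'X * eulerk_poly m *+ m.+1.
Proof.
apply/polyP => -[|t]; rewrite coef_eulerk_poly mulrBl mul1r;
  rewrite !(coefXM_deriv, coefD, coefN, coefMn, coefXM, coef_eulerk_poly) /=.
  rewrite mulr0 addr0 intrM !intrD -!pmulrn.
  move: (eulk k m 0)%:~R => b; ring.
case: ltnP => [|tm].
  rewrite ltnS => tm; rewrite (eulk_eq0 tm) (eulk_eq0 (ltnW tm : (m < t.+1)%N)).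
  by rewrite !mul0rn subrr !add0r.
rewrite intrD !intrM !intrB !intrD -!pmulrn.
move: (eulk k m t.+1)%:~R (eulk k m t)%:~R => a b; ring.
Qed.

Lemma eulerian_diffS m :
  eulerian_poly m.+1 - 'X^(k.+1) * eulerk_poly m.+1 =
  eulerian_step m (eulerian_poly m - 'X^(k.+1) * eulerk_poly m).
Proof.
rewrite eulerian_polyS eulerk_polyS /eulerian_step derivB derivM derivXn /= !exprS.
ring.
Qed.

Lemma power_sum_polyS m : power_sum_poly m.+1 = 'X * (power_sum_poly m)^`().
Proof.
apply/polyP => t; rewrite coefXM_deriv !coef_poly.
by case: ifP => _; rewrite ?mul0rn // exprSr mulr_natr.
Qed.

Lemma power_sum_polyE m :
  (1 - 'X) ^+ m.+1 * power_sum_poly m = eulerian_poly m - 'X^(k.+1) * eulerk_poly m.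
Proof.
elim: m => [|m IHm].
  apply/polyP => -[|t]; rewrite expr1 mulrBl mul1r.
    by rewrite !(coefB, coefXM, coefXnM, coef_eulerian_poly, coef_eulerk_poly, coef_poly).
  rewrite !(coefB, coefXM, coefXnM, coef_eulerian_poly, coef_eulerk_poly, coef_poly) /=.
  rewrite !expr0 !ltnS.
  case: (ltngtP t k) => [tk|tk|->]; first by rewrite !subrr.
    by rewrite subSS subn_eq0 leqNgt tk.
  by rewrite subnn.
rewrite eulerian_diffS -IHm power_sum_polyS /eulerian_step.
rewrite derivM deriv_exp derivB derivX derivC /= !exprS.
ring.
Qed.

Lemma horner_power_sum_poly m x : (0 < m)%N ->
  (power_sum_poly m).[x] = \sum_(1 <= i < k.+1) i%:R ^+ m * x ^+ i.
Proof.
move=> m_gt0; rewrite horner_poly big_ord_recl /= expr0n gtn_eqF // mul0r add0r.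
by rewrite big_add1 big_mkord.
Qed.

Lemma horner_eulerian_poly m n x : (m <= n)%N ->
  (eulerian_poly m).[x] = \sum_(0 <= i < n.+1) (eul m i)%:R * x ^+ i.
Proof.
move=> mn; rewrite big_mkord (@horner_coef_wide _ n.+1) ?(leq_trans (size_poly _ _)) //.
by apply: eq_bigr => i _; rewrite coef_eulerian_poly.
Qed.

Lemma horner_eulerk_poly m n x : (m <= n)%N ->
  (eulerk_poly m).[x] = \sum_(0 <= i < n.+1) (eulk k%:Z m i)%:~R * x ^+ i.
Proof.
move=> mn; rewrite big_mkord (@horner_coef_wide _ n.+1) ?(leq_trans (size_poly _ _)) //.
by apply: eq_bigr => i _; rewrite coef_eulerk_poly.
Qed.

End EulerianPolynomials.

Lemma power_sum_eulerian (F : fieldType) k m n (x : F) :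
    x != 0 -> x != 1 -> (0 < m)%N -> (m <= n)%N ->
  \sum_(1 <= i < k.+1) ((1 - x) * (i%:R : F) ^+ m / x ^+ (k - i + 1)) =
  \sum_(0 <= i < n.+1) (((eul m i)%:R * x ^+ i - (eulk k%:Z m i)%:~R * x ^+ (k + i + 1))
     / ((1 - x) ^+ m * x ^+ (k + 1))).
Proof.
move=> x0 x1 m_gt0 mn; have x1' : 1 - x != 0 by rewrite subr_eq0 eq_sym.
have := congr1 (horner^~ x) (power_sum_polyE F k m).
rewrite /= !hornerE horner_power_sum_poly //.
rewrite (horner_eulerian_poly _ _ _ _ mn) (horner_eulerk_poly _ _ _ _ _ mn) => power_sum_eq.
have shift_pow : \sum_(0 <= i < n.+1) (eulk k m i)%:~R * x ^+ (k + i + 1) =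
    x ^+ k.+1 * \sum_(0 <= i < n.+1) (eulk k m i)%:~R * x ^+ i.
  by rewrite mulr_sumr; apply: eq_bigr => i _; rewrite addnAC exprD mulrCA addn1.
rewrite -mulr_suml sumrB shift_pow addn1 -power_sum_eq.
have -> : \sum_(1 <= i < k.+1) (1 - x) * (i%:R : F) ^+ m / x ^+ (k - i + 1) =
    (1 - x) / x ^+ k.+1 * \sum_(1 <= i < k.+1) i%:R ^+ m * x ^+ i.
  rewrite mulr_sumr !big_nat; apply: eq_bigr => i /andP [_ ik].
  have -> : x ^+ k.+1 = x ^+ (k - i + 1) * x ^+ i by rewrite -exprD; congr (_ ^+ _); lia.
  by field; rewrite !expf_neq0.
by rewrite [(1 - x) ^+ _.+1]exprS; field; rewrite !expf_neq0.
Qed.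

(** * Runs of heads *)

Lemma has_runE k s : has_run k s = infix (nseq k true) s.
Proof.
apply/existsP/infixP => [[i /andP [iks run]]|[u [v ->]]].
  have size_run : size (take k (drop i s)) = k by rewrite size_takel // size_drop; lia.
  have run_nseq : take k (drop i s) = nseq k true.
    by rewrite -[in RHS]size_run; apply/all_pred1P; apply: sub_all run => b /= ->.
  by exists (take i s), (drop k (drop i s)); rewrite -run_nseq !cat_take_drop.
have u_le : (size u < (size (u ++ nseq k true ++ v)).+1)%N by rewrite ltnS size_cat leq_addr.
exists (Ordinal u_le) => /=.
rewrite !size_cat size_nseq leq_add2l leq_addr /= drop_size_cat //.
by rewrite take_size_cat ?size_nseq // all_nseq orbT.
Qed.

Lemma prefix_nseq_false k c w :
  prefix (nseq k true) (nseq c true ++ false :: w) = (k <= c)%N.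
Proof. by elim: c k => [|c IHc] [|k] //=. Qed.

Lemma has_run_nseq_cat k c w : (k <= c)%N -> has_run k (nseq c true ++ w).
Proof. by move=> kc; rewrite has_runE -(subnKC kc) nseqD -catA prefix_infix. Qed.

Lemma has_run_nseq k c : has_run k (nseq c true) = (k <= c)%N.
Proof.
apply/idP/idP => [|kc]; last by rewrite -[nseq c true]cats0 has_run_nseq_cat.
by rewrite has_runE => /size_infix; rewrite !size_nseq.
Qed.

Lemma has_run_nseq_false k c w : (0 < k)%N ->
  has_run k (nseq c true ++ false :: w) = (k <= c)%N || has_run k w.
Proof.
rewrite !has_runE; case: k => // k _; elim: c => [|c IHc] //.
by rewrite infix_consl (prefix_nseq_false k.+1 c.+1) IHc orbA (orb_idr (@leqW _ _)).
Qed.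

Lemma cat_nseq_cons (T : Type) c (x : T) w : nseq c x ++ x :: w = nseq c.+1 x ++ w.
Proof. by rewrite !cat_nseq /ncons iterSr. Qed.

Lemma take_size_pred_cat (T : eqType) (s w : seq T) : w != [::] ->
  take (size (s ++ w)).-1 (s ++ w) = s ++ take (size w).-1 w.
Proof. by case: w => // b w _; rewrite size_cat addnS take_cat ltnNge leq_addr addKn. Qed.

Lemma first_run_at_end_nseq k c : (c < k)%N -> first_run_at_end k (nseq c true) = false.
Proof. by move=> ck; rewrite /first_run_at_end has_run_nseq leqNgt ck. Qed.

Lemma first_run_at_end_run k w : (0 < k)%N -> first_run_at_end k (nseq k true ++ w) = (w == [::]).
Proof.
move=> k_gt0; case: w => [|b w].
  rewrite cats0 /first_run_at_end size_nseq take_nseq ?leq_pred // !has_run_nseq leqnn /=.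
  by rewrite -ltnNge ltn_predL.
by rewrite /first_run_at_end take_size_pred_cat // !has_run_nseq_cat.
Qed.

Lemma first_run_at_end_false k c w : (c < k)%N ->
  first_run_at_end k (nseq c true ++ false :: w) = first_run_at_end k w.
Proof.
move=> ck; have k_gt0 : (0 < k)%N by apply: leq_ltn_trans ck.
have reset u : has_run k ((nseq c true ++ [:: false]) ++ u) = has_run k u.
  by rewrite -catA has_run_nseq_false // leqNgt ck.
case: w => [|b w].
  by rewrite /first_run_at_end has_run_nseq_false // (has_run_nseq k 0) leqNgt ck leqNgt k_gt0.
by rewrite -cat1s catA /first_run_at_end take_size_pred_cat // !reset.
Qed.

(** * The renewal equation *)

Lemma sum_tuple_cons (T : finType) (V : nmodType) m (F : m.+1.-tuple T -> V) :
  \sum_(t : m.+1.-tuple T) F t = \sum_(t : m.-tuple T) \sum_(x : T) F [tuple of x :: t].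
Proof.
rewrite exchange_big pair_big /=.
rewrite (reindex (fun xt : T * m.-tuple T => [tuple of xt.1 :: xt.2])) //=.
exists (fun t : m.+1.-tuple T => (thead t, [tuple of behead t])).
  by move=> [x t] _ /=; congr (_, _); apply: val_inj.
by move=> t _; rewrite [RHS]tuple_eta.
Qed.

Lemma sum_tuple0 (T : finType) (V : nmodType) (F : 0.-tuple T -> V) :
  \sum_(t : 0.-tuple T) F t = F [tuple].
Proof.
rewrite (eq_bigr (fun=> F [tuple])) => [|t _]; last by rewrite tuple0.
by rewrite sumr_const card_tuple.
Qed.

Section RunProbability.
Variables (R : realType) (p : R) (k : nat).

Definition run_prob c m : R :=
  \sum_(t : m.-tuple bool) word_prob p t * (first_run_at_end k (nseq c true ++ t))%:R.

Lemma run_prob0 c : (c < k)%N -> run_prob c 0 = 0.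
Proof. by move=> ck; rewrite /run_prob sum_tuple0 cats0 first_run_at_end_nseq ?mulr0. Qed.

Lemma word_prob_cons b w : word_prob p (b :: w) = (if b then p else 1 - p) * word_prob p w.
Proof. by rewrite /word_prob big_cons. Qed.

Lemma sum_word_prob_nil m :
  \sum_(t : m.-tuple bool) word_prob p t * (t == [::] :> seq bool)%:R = (m == 0)%:R.
Proof.
case: m => [|m]; first by rewrite sum_tuple0 /word_prob big_nil mulr1.
by rewrite big1 // => t _; rewrite -size_eq0 size_tuple mulr0.
Qed.

Lemma run_probS c m : (c < k)%N -> run_prob c m.+1 =
  p * (if (k <= c.+1)%N then (m == 0)%:R else run_prob c.+1 m) + (1 - p) * run_prob 0 m.
Proof.
move=> ck; rewrite /run_prob sum_tuple_cons.
under eq_bigr => t _.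
  by rewrite big_bool /= !word_prob_cons cat_nseq_cons first_run_at_end_false //; over.
rewrite big_split /=; congr (_ + _); last first.
  by rewrite mulr_sumr; apply: eq_bigr => t _; rewrite mulrA.
case: ifP => [kc|_]; last by rewrite mulr_sumr; apply: eq_bigr => t _; rewrite mulrA.
have -> : k = c.+1 by apply/eqP; rewrite eqn_leq kc.
rewrite -sum_word_prob_nil mulr_sumr; apply: eq_bigr => t _.
by rewrite first_run_at_end_run // mulrA.
Qed.

Lemma run_prob_renewal d c m : (c + d)%N = k -> (0 < d)%N ->
  run_prob c m =
  (m == d)%:R * p ^+ d + \sum_(1 <= i < d.+1) p ^+ i.-1 * (1 - p) * run_prob 0 (m - i)%N.
Proof.
elim: d c m => [//|d IHd] c [|m] cdk _.
  rewrite run_prob0 ?mul0r ?add0r; last lia.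
  by rewrite big1 // => i _; rewrite run_prob0 ?mulr0 //; lia.
rewrite run_probS; last lia.
case: d IHd cdk => [|d] IHd cdk.
  rewrite ifT; last lia.
  by rewrite big_nat1 expr0 mul1r expr1 eqSS subn1 mulrC.
rewrite ifF; last lia.
rewrite (IHd c.+1 m) ?addSnnS // (@big_nat_recl _ _ _ d.+2) // expr0 mul1r subSS subn0 eqSS.
rewrite mulrDr -addrA mulrCA -exprS; congr (_ + _).
rewrite addrC mulr_sumr; congr (_ + _); apply: eq_big_nat => i /andP [i_gt0 _].
by rewrite subSS !mulrA -exprS prednK.
Qed.

Lemma PY_run_prob m : PY p k m = run_prob 0 m.
Proof. by rewrite /PY big_mkcond; apply: eq_bigr => t _; case: ifP; rewrite ?mulr1 ?mulr0. Qed.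

End RunProbability.

(* [m - i] is truncated subtraction, which is harmless as [PY p k 0 = 0]. *)
Lemma PY_renewal {R : realType} (p : R) k m : (0 < k)%N ->
  PY p k m = (m == k)%:R * p ^+ k + \sum_(1 <= i < k.+1) p ^+ i.-1 * (1 - p) * PY p k (m - i)%N.
Proof.
move=> k_gt0; rewrite !PY_run_prob (@run_prob_renewal _ _ _ k 0) //.
by congr (_ + _); apply: eq_bigr => i _; rewrite PY_run_prob.
Qed.

(** * Moments *)

Lemma sum_geometric_weights (R : comNzRingType) (x : R) K :
  \sum_(1 <= i < K.+1) x ^+ i.-1 * (1 - x) = 1 - x ^+ K.
Proof.
rewrite big_add1 /=; elim: K => [|K IHK]; first by rewrite big_geq // expr0 subrr.
by rewrite big_nat_recr //= IHK exprS; ring.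
Qed.

Section Moments.
Context {R : realType} {p : R} {k : nat}.
Hypotheses (p_gt0 : 0 < p) (p_lt1 : p < 1) (k_gt0 : (0 < k)%N).

Definition moment_sum n := series (fun m : nat => (m%:R : R) ^+ n * PY p k m).

Definition renewal_term n j N := \sum_(1 <= i < k.+1)
  p ^+ i.-1 * (1 - p) * (i%:R : R) ^+ (n - j) * moment_sum j (N + (k.+1 - i))%N.

Lemma PY0 : PY p k 0 = 0.
Proof. by rewrite PY_run_prob run_prob0. Qed.

Lemma PY_ge0 m : 0 <= PY p k m.
Proof.
apply: sumr_ge0 => w _; apply: prodr_ge0 => -[|] _; first exact: ltW.
by rewrite subr_ge0 ltW.
Qed.

Lemma tail_weight_ge0 i : 0 <= p ^+ i.-1 * (1 - p).
Proof. by rewrite mulr_ge0 ?exprn_ge0 ?subr_ge0 ?ltW. Qed.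

Lemma moment_sum_nondecreasing n : nondecreasing_seq (moment_sum n).
Proof.
move=> M N MN; rewrite /moment_sum /series /= (@big_cat_nat _ _ _ M 0 N) //= lerDl.
by apply: sumr_ge0 => m _; rewrite mulr_ge0 ?exprn_ge0 ?ler0n ?PY_ge0.
Qed.

Lemma sum_PY_sub (f : nat -> R) i M : (i <= M)%N ->
  \sum_(0 <= m < M) f m * PY p k (m - i)%N = \sum_(0 <= m < M - i) f (m + i)%N * PY p k m.
Proof.
move=> iM; rewrite (@big_cat_nat _ _ _ i 0 M) //= big1_seq ?add0r.
  by rewrite -{1}(add0n i) big_addn; apply: eq_bigr => m _; rewrite addnK.
move=> m /andP [_]; rewrite mem_index_iota => /andP [_ mi].
by rewrite (eqnP (ltnW mi) : (m - i = 0)%N) PY0 mulr0.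
Qed.

Lemma sum_shift_pow_PY n i M : \sum_(0 <= m < M) ((m + i)%:R : R) ^+ n * PY p k m =
  \sum_(0 <= j < n.+1) 'C(n, j)%:R * (i%:R : R) ^+ (n - j) * moment_sum j M.
Proof.
under eq_bigr do rewrite natrD addrC exprDn mulr_suml.
rewrite exchange_big big_mkord; apply: eq_bigr => j _.
by rewrite /moment_sum /series /= mulr_sumr; apply: eq_bigr => m _; ring.
Qed.

Lemma moment_sum_shift n N : moment_sum n (N + k.+1)%N =
  (k%:R : R) ^+ n * p ^+ k + \sum_(0 <= j < n.+1) 'C(n, j)%:R * renewal_term n j N.
Proof.
rewrite /moment_sum /series /=.
under eq_bigr do rewrite (PY_renewal _ _ _ k_gt0) mulrDr mulr_sumr.
rewrite big_split /=; congr (_ + _).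
  rewrite (bigD1_seq k) ?mem_index_iota ?leq_addl ?iota_uniq //= eqxx mul1r.
  by rewrite big1 ?addr0 // => m /negPf ->; rewrite mul0r mulr0.
rewrite exchange_big /=.
transitivity (\sum_(1 <= i < k.+1) \sum_(0 <= j < n.+1) 'C(n, j)%:R *
    (p ^+ i.-1 * (1 - p) * (i%:R : R) ^+ (n - j) * moment_sum j (N + (k.+1 - i))%N)).
  apply: eq_big_nat => i /andP [_ ik]; under eq_bigr do rewrite mulrCA.
  rewrite -mulr_sumr (sum_PY_sub (fun m => m%:R ^+ n)) -?addnBA ?sum_shift_pow_PY; try lia.
  by rewrite mulr_sumr; apply: eq_bigr => j _; ring.
by rewrite exchange_big /=; apply: eq_bigr => j _; rewrite /renewal_term mulr_sumr.
Qed.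

Definition renewal_weight e :=
  \sum_(1 <= i < k.+1) p ^+ i.-1 * (1 - p) * (i%:R : R) ^+ e.

Definition moment_rhs n := (k%:R : R) ^+ n * p ^+ k +
  \sum_(0 <= j < n) 'C(n, j)%:R * limn (moment_sum j) * renewal_weight (n - j).

Lemma renewal_weight0 : renewal_weight 0 = 1 - p ^+ k.
Proof.
by rewrite -sum_geometric_weights; apply: eq_bigr => i _; rewrite expr0 mulr1.
Qed.

Lemma renewal_term_diag_le n N :
  renewal_term n n N <= (1 - p ^+ k) * moment_sum n (N + k.+1)%N.
Proof.
rewrite /renewal_term -renewal_weight0 mulr_suml; apply: ler_sum => i _.
rewrite subnn ler_wpM2l ?(mulr_ge0 (tail_weight_ge0 i)) ?exprn_ge0 ?ler0n //.
by apply: moment_sum_nondecreasing; rewrite leq_add2l leq_subr.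
Qed.

Lemma renewal_term_le_lim n j N : cvgn (moment_sum j) ->
  renewal_term n j N <= limn (moment_sum j) * renewal_weight (n - j).
Proof.
move=> cvg_j; rewrite /renewal_term mulr_sumr; apply: ler_sum => i _.
rewrite [X in _ <= X]mulrC ler_wpM2l ?(mulr_ge0 (tail_weight_ge0 i)) ?exprn_ge0 ?ler0n //.
exact: nondecreasing_cvgn_le (moment_sum_nondecreasing j) cvg_j _.
Qed.

Lemma moment_sum_bounded n N : (forall j, (j < n)%N -> cvgn (moment_sum j)) ->
  p ^+ k * moment_sum n (N + k.+1)%N <= moment_rhs n.
Proof.
move=> cvg_lt; have := moment_sum_shift n N; rewrite big_nat_recr //= binn mul1r => shift.
have diag := renewal_term_diag_le n N.
have off : \sum_(0 <= j < n) 'C(n, j)%:R * renewal_term n j N <=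
    \sum_(0 <= j < n) 'C(n, j)%:R * limn (moment_sum j) * renewal_weight (n - j).
  rewrite !big_nat; apply: ler_sum => j /andP [_ jn].
  by rewrite -mulrA ler_wpM2l //; apply: renewal_term_le_lim; apply: cvg_lt.
rewrite /moment_rhs; lra.
Qed.

Lemma moment_cvg n : cvgn (moment_sum n).
Proof.
elim/ltn_ind: n => n IHn.
apply: nondecreasing_is_cvgn; first exact: moment_sum_nondecreasing.
have pk_gt0 : 0 < p ^+ k := exprn_gt0 _ p_gt0.
exists (moment_rhs n / p ^+ k) => _ [N _ <-].
rewrite ler_pdivlMr // mulrC; apply: le_trans (moment_sum_bounded n N IHn).
by rewrite ler_wpM2l ?(ltW pk_gt0) //; apply: moment_sum_nondecreasing; rewrite leq_addr.
Qed.

Lemma renewal_term_cvg n j :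
  renewal_term n j N @[N --> \oo] --> limn (moment_sum j) * renewal_weight (n - j).
Proof.
rewrite mulr_sumr; apply: cvg_big => [|i _]; first exact: add_continuous.
by rewrite [X in _ --> X]mulrC; apply: cvgMl_tmp; rewrite cvg_shiftn; apply: moment_cvg.
Qed.

Lemma moment_sum_cvg_rec n : moment_sum n @ \oo --> (k%:R : R) ^+ n * p ^+ k +
  \sum_(0 <= j < n.+1) 'C(n, j)%:R * limn (moment_sum j) * renewal_weight (n - j).
Proof.
rewrite -(cvg_shiftn k.+1) /=; under eq_cvg do rewrite moment_sum_shift.
apply: cvgD; first exact: cvg_cst.
apply: cvg_big => [|j _]; first exact: add_continuous.
by rewrite -mulrA; apply: cvgMl_tmp; apply: renewal_term_cvg.
Qed.

Lemma moment_lim n : p ^+ k * limn (moment_sum n) = moment_rhs n.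
Proof.
have := cvg_lim (@Rhausdorff R) (FF := eventually_filter) (moment_sum_cvg_rec n).
by rewrite big_nat_recr //= binn mul1r subnn renewal_weight0 /moment_rhs; lra.
Qed.

Lemma EY_cvg n : series (fun m : nat => (m%:R : R) ^+ n * PY p k m) @ \oo --> EY p k n.
Proof. exact: moment_cvg. Qed.

Lemma EY_rec n : EY p k n = (k%:R : R) ^+ n + \sum_(0 <= j < n) ('C(n, j)%:R * EY p k j *
  \sum_(1 <= i < k.+1) ((1 - p) * (i%:R : R) ^+ (n - j) / p ^+ (k - i + 1))).
Proof.
have pk_neq0 : p ^+ k != 0 by rewrite expf_neq0 // gt_eqF.
apply: (mulfI pk_neq0); rewrite [LHS]moment_lim /moment_rhs /renewal_weight.
rewrite mulrDr mulr_sumr mulrC.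
congr (_ + _); apply: eq_bigr => j _; rewrite mulrCA; congr (_ * _).
rewrite mulr_sumr !big_nat; apply: eq_bigr => i /andP [i_gt0 ik].
have -> : p ^+ k = p ^+ i.-1 * p ^+ (k - i + 1) by rewrite -exprD; congr (_ ^+ _); lia.
by field; rewrite expf_neq0 // gt_eqF.
Qed.

Lemma EY0 : EY p k 0 = 1.
Proof. by rewrite EY_rec big_geq // expr0 addr0. Qed.

End Moments.

Theorem theorem3p1 (R : realType) (p : R) (k : nat)
    (hp0 : 0 < p) (hp1 : p < 1) (hk : (1 <= k)%N) :
  series (fun m : nat => PY p k m) @ \oo --> (1 : R) /\
  forall n : nat, (1 <= n)%N ->
    series (fun m : nat => (m%:R : R) ^+ n * PY p k m) @ \oo -->
      ((k%:R : R) ^+ n + \sum_(0 <= j < n) ('C(n, j)%:R * EY p k j *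
         \sum_(1 <= i < k.+1) ((1 - p) * (i%:R : R) ^+ (n - j) / p ^+ (k - i + 1))))
    /\
    (k%:R : R) ^+ n + \sum_(0 <= j < n) ('C(n, j)%:R * EY p k j *
         \sum_(1 <= i < k.+1) ((1 - p) * (i%:R : R) ^+ (n - j) / p ^+ (k - i + 1)))
    = (k%:R : R) ^+ n + \sum_(0 <= j < n) ('C(n, j)%:R * EY p k j *
         \sum_(0 <= i < n.+1)
           (((eul (n - j) i)%:R * p ^+ i - (eulk k%:Z (n - j) i)%:~R * p ^+ (k + i + 1))
            / ((1 - p) ^+ (n - j) * p ^+ (k + 1)))).
Proof.
split.
  under eq_fun => m do rewrite -[PY p k m]mul1r -(expr0 (m%:R : R)).
  by rewrite -(EY0 hp0 hp1 hk); apply: EY_cvg.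
move=> n _; rewrite -(EY_rec hp0 hp1 hk); split; first exact: EY_cvg.
rewrite (EY_rec hp0 hp1 hk); congr (_ + _); apply: eq_big_nat => j /andP [_ jn]; congr (_ * _).
apply: power_sum_eulerian; last exact: leq_subr.
- by rewrite gt_eqF.
- by rewrite lt_eqF.
- by rewrite subn_gt0.
Qed.
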